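(* Let $\mathbf{H}$ be any one of the four history systems $\mathbf{G3N}^{Hist}$, $\mathbf{G3NeF}^{Hist}$, $\mathbf{G3CoPC}^{Hist}$, $\mathbf{G3MPC}^{Hist}$. Backward proof search in $\mathbf{H}$ terminates: there is no infinite sequence $S_0,S_1,S_2,\dots$ of history sequents such that, for every $i$, $S_{i+1}$ is a premise of some instance of a rule of $\mathbf{H}$ whose conclusion is $S_i$.
   Context: Formulas are generated from a countable set of propositional variables $p,q,\dots$ and the constant $\top$ by the grammar $\varphi::= p\mid\top\mid\varphi\wedge\varphi\mid\varphi\vee\varphi\mid\varphi\to\varphi\mid\neg\varphi$ (there is no constant $\bot$). A history sequent is an expression $\mathcal H\mid\Gamma\Rightarrow\varphi$ where $\mathcal H$ (the history) is a finite set of formulas, $\Gamma$ is a finite multiset of formulas and $\varphi$ is a formula (the goal). $(\psi,\mathcal H)$ denotes $\mathcal H\cup\{\psi\}$, $\emptyset$ is the empty history, $\Gamma,\alpha$ denotes $\Gamma$ with one more occurrence of $\alpha$, and ''$\alpha\in\Gamma$'' means $\alpha$ occurs in $\Gamma$. History rules ($p$ a propositional variable; side conditions after ''if''): (ax) $\mathcal H\mid\Gamma,p\Rightarrow p$; ($\top$) $\mathcal H\mid\Gamma\Rightarrow\top$; ($\to$r$_1$) from $\emptyset\mid\Gamma,\alpha\Rightarrow\beta$ infer $\mathcal H\mid\Gamma\Rightarrow\alpha\to\beta$, if $\alpha\notin\Gamma$; ($\to$r$_2$) from $\mathcal H\mid\Gamma\Rightarrow\beta$ infer $\mathcal H\mid\Gamma\Rightarrow\alpha\to\beta$,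 if $\alpha\in\Gamma$; ($\to$l) from $(\varphi,\mathcal H)\mid\Gamma,\alpha\to\beta\Rightarrow\alpha$ and $\emptyset\mid\Gamma,\alpha\to\beta,\beta\Rightarrow\varphi$ infer $\mathcal H\mid\Gamma,\alpha\to\beta\Rightarrow\varphi$, if $\varphi\notin\mathcal H$ and $\beta\notin\Gamma$; ($\wedge$r) from $\mathcal H\mid\Gamma\Rightarrow\alpha$ and $\mathcal H\mid\Gamma\Rightarrow\beta$ infer $\mathcal H\mid\Gamma\Rightarrow\alpha\wedge\beta$; ($\wedge$l$_1$) from $\emptyset\mid\Gamma,\alpha\wedge\beta,\alpha\Rightarrow\varphi$ infer $\mathcal H\mid\Gamma,\alpha\wedge\beta\Rightarrow\varphi$, if $\alpha\notin\Gamma$; ($\wedge$l$_2$) from $\emptyset\mid\Gamma,\alpha\wedge\beta,\beta\Rightarrow\varphi$ infer $\mathcal H\mid\Gamma,\alpha\wedge\beta\Rightarrow\varphi$, if $\beta\notin\Gamma$; ($\vee$r$_1$), ($\vee$r$_2$) from $\mathcal H\mid\Gamma\Rightarrow\alpha$ (resp. $\mathcal H\mid\Gamma\Rightarrow\beta$) infer $\mathcal H\mid\Gamma\Rightarrow\alpha\vee\beta$; ($\vee$l) from $\emptyset\mid\Gamma,\alpha\vee\beta,\alpha\Rightarrow\varphi$ and $\emptyset\mid\Gamma,\alpha\vee\beta,\beta\Rightarrow\varphi$ infer $\mathcal H\mid\Gamma,\alpha\vee\beta\Rightarrow\varphi$, if $\alpha,\beta\notin\Gamma$; (n$_1$) from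 $\emptyset\mid\Gamma,\neg\alpha,\beta\Rightarrow\alpha$ and $\emptyset\mid\Gamma,\neg\alpha,\alpha\Rightarrow\beta$ infer $\mathcal H\mid\Gamma,\neg\alpha\Rightarrow\neg\beta$, if $\beta\notin\Gamma\cup\{\neg\alpha\}$ and $\alpha\notin\Gamma$; (n$_2$) from $\emptyset\mid\Gamma,\neg\alpha,\beta\Rightarrow\alpha$ and $\mathcal H\mid\Gamma,\neg\alpha\Rightarrow\beta$ infer $\mathcal H\mid\Gamma,\neg\alpha\Rightarrow\neg\beta$, if $\beta\notin\Gamma\cup\{\neg\alpha\}$ and $\alpha\in\Gamma$; (n$_3$) from $(\neg\beta,\mathcal H)\mid\Gamma,\neg\alpha\Rightarrow\alpha$ and $\emptyset\mid\Gamma,\neg\alpha,\alpha\Rightarrow\beta$ infer $\mathcal H\mid\Gamma,\neg\alpha\Rightarrow\neg\beta$, if $\neg\beta\notin\mathcal H$, $\beta\in\Gamma\cup\{\neg\alpha\}$ and $\alpha\notin\Gamma$; (n$_4$) from $(\neg\beta,\mathcal H)\mid\Gamma,\neg\alpha\Rightarrow\alpha$ and $\mathcal H\mid\Gamma,\neg\alpha\Rightarrow\beta$ infer $\mathcal H\mid\Gamma,\neg\alpha\Rightarrow\neg\beta$, if $\neg\beta\notin\mathcal H$, $\beta\in\Gamma\cup\{\neg\alpha\}$ and $\alpha\in\Gamma$; (nef) from $(\neg\beta,\mathcal H)\mid\Gamma,\neg\alpha\Rightarrow\alpha$ infer $\mathcal H\mid\Gamma,\neg\alpha\Rightarrow\neg\beta$,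 if $\neg\beta\notin\mathcal H$; (copc$_1$) from $\emptyset\mid\Gamma,\neg\alpha,\beta\Rightarrow\alpha$ infer $\mathcal H\mid\Gamma,\neg\alpha\Rightarrow\neg\beta$, if $\beta\notin\Gamma\cup\{\neg\alpha\}$; (copc$_2$) from $(\neg\beta,\mathcal H)\mid\Gamma,\neg\alpha\Rightarrow\alpha$ infer $\mathcal H\mid\Gamma,\neg\alpha\Rightarrow\neg\beta$, if $\neg\beta\notin\mathcal H$ and $\beta\in\Gamma\cup\{\neg\alpha\}$; (an) from $\emptyset\mid\Gamma,\alpha\Rightarrow\neg\alpha$ infer $\mathcal H\mid\Gamma\Rightarrow\neg\alpha$, if $\alpha\notin\Gamma$. In addition, the left rules ($\to$l), ($\wedge$l$_1$), ($\wedge$l$_2$), ($\vee$l) may only be applied when the goal $\varphi$ of the conclusion is a propositional variable, a negation or a disjunction. The positive history rules are (ax) through ($\vee$l). The four history systems are: $\mathbf{G3N}^{Hist}$ = positive history rules + (n$_1$)–(n$_4$); $\mathbf{G3NeF}^{Hist}$ = positive history rules + (n$_1$)–(n$_4$) + (nef); $\mathbf{G3CoPC}^{Hist}$ = positive history rules + (copc$_1$), (copc$_2$); $\mathbf{G3MPC}^{Hist}$ = positive history rules + (copc$_1$), (copc$_2$), (an). A derivation is a finite tree of rule instances whose leaves are instances of (ax) or ($\top$). *)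

From Stdlib Require Import List Permutation.
Import ListNotations.

Inductive formula : Type :=
| Var : nat -> formula
| Top : formula
| And : formula -> formula -> formula
| Or  : formula -> formula -> formula
| Imp : formula -> formula -> formula
| Neg : formula -> formula.

(* The history (a finite set) and the antecedent
   (a finite multiset) are represented by lists; sequents are identified up to
   [seq_equiv] (same elements of history, permutation of antecedent). *)
Record hseq : Type := HS { hist : list formula; ctx : list formula; goal : formula }.

Definition seq_equiv (S T : hseq) : Prop :=
  (forall x, In x (hist S) <-> In x (hist T)) /\
  Permutation (ctx S) (ctx T) /\ goal S = goal T.

Inductive system : Type := G3N | G3NeF | G3CoPC | G3MPC.

Definition has_n (s : system) : Prop := s = G3N \/ s = G3NeF.
Definition has_nef (s : system) : Prop := s = G3NeF.
Definition has_copc (s : system) : Prop := s = G3CoPC \/ s = G3MPC.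
Definition has_an (s : system) : Prop := s = G3MPC.

Definition lgoal (phi : formula) : Prop :=
  (exists p, phi = Var p) \/ (exists a, phi = Neg a) \/ (exists a b, phi = Or a b).

(* [rule s prems concl]: there is an instance of a rule of system [s] with
   premises [prems] and conclusion [concl]. "Γ, α" is written [α :: Γ]. *)
Inductive rule (s : system) : list hseq -> hseq -> Prop :=
| r_ax : forall H G p, rule s [] (HS H (Var p :: G) (Var p))
| r_top : forall H G, rule s [] (HS H G Top)
| r_impr1 : forall H G a b, ~ In a G ->
    rule s [HS [] (a :: G) b] (HS H G (Imp a b))
| r_impr2 : forall H G a b, In a G ->
    rule s [HS H G b] (HS H G (Imp a b))
| r_impl : forall H G a b phi, ~ In phi H -> ~ In b G -> lgoal phi ->
    rule s [HS (phi :: H) (Imp a b :: G) a; HS [] (b :: Imp a b :: G) phi]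
           (HS H (Imp a b :: G) phi)
| r_andr : forall H G a b,
    rule s [HS H G a; HS H G b] (HS H G (And a b))
| r_andl1 : forall H G a b phi, ~ In a G -> lgoal phi ->
    rule s [HS [] (a :: And a b :: G) phi] (HS H (And a b :: G) phi)
| r_andl2 : forall H G a b phi, ~ In b G -> lgoal phi ->
    rule s [HS [] (b :: And a b :: G) phi] (HS H (And a b :: G) phi)
| r_orr1 : forall H G a b,
    rule s [HS H G a] (HS H G (Or a b))
| r_orr2 : forall H G a b,
    rule s [HS H G b] (HS H G (Or a b))
| r_orl : forall H G a b phi, ~ In a G -> ~ In b G -> lgoal phi ->
    rule s [HS [] (a :: Or a b :: G) phi; HS [] (b :: Or a b :: G) phi]
           (HS H (Or a b :: G) phi)
| r_n1 : forall H G a b, has_n s -> ~ In b (Neg a :: G) -> ~ In a G ->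
    rule s [HS [] (b :: Neg a :: G) a; HS [] (a :: Neg a :: G) b]
           (HS H (Neg a :: G) (Neg b))
| r_n2 : forall H G a b, has_n s -> ~ In b (Neg a :: G) -> In a G ->
    rule s [HS [] (b :: Neg a :: G) a; HS H (Neg a :: G) b]
           (HS H (Neg a :: G) (Neg b))
| r_n3 : forall H G a b, has_n s -> ~ In (Neg b) H -> In b (Neg a :: G) -> ~ In a G ->
    rule s [HS (Neg b :: H) (Neg a :: G) a; HS [] (a :: Neg a :: G) b]
           (HS H (Neg a :: G) (Neg b))
| r_n4 : forall H G a b, has_n s -> ~ In (Neg b) H -> In b (Neg a :: G) -> In a G ->
    rule s [HS (Neg b :: H) (Neg a :: G) a; HS H (Neg a :: G) b]
           (HS H (Neg a :: G) (Neg b))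
| r_nef : forall H G a b, has_nef s -> ~ In (Neg b) H ->
    rule s [HS (Neg b :: H) (Neg a :: G) a] (HS H (Neg a :: G) (Neg b))
| r_copc1 : forall H G a b, has_copc s -> ~ In b (Neg a :: G) ->
    rule s [HS [] (b :: Neg a :: G) a] (HS H (Neg a :: G) (Neg b))
| r_copc2 : forall H G a b, has_copc s -> ~ In (Neg b) H -> In b (Neg a :: G) ->
    rule s [HS (Neg b :: H) (Neg a :: G) a] (HS H (Neg a :: G) (Neg b))
| r_an : forall H G a, has_an s -> ~ In a G ->
    rule s [HS [] (a :: G) (Neg a)] (HS H G (Neg a)).

Definition premise_step (s : system) (S' S : hseq) : Prop :=
  exists prems C, rule s prems C /\ seq_equiv C S /\
    exists P, In P prems /\ seq_equiv P S'.

From Stdlib Require Import List Permutation Lia Wf_nat.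
From Stdlib Require Import Relation_Operators Lexicographic_Product.
Import ListNotations.

(* Fix the finite set U of subformulas of the root sequent S_0.  Every rule
   premise only contains formulas of its conclusion or their immediate
   subformulas, so all sequents S_i of a backward search have their goal and
   antecedent in U.  To each sequent we attach the measure
     (#(U not in the antecedent), #(U not in the history), size of the goal),
   and compare measures lexicographically.  Inspecting the rules, every premise
   either adds a new formula to the antecedent, or keeps the antecedent and
   adds the (new) goal to the history, or keeps both and shrinks the goal; in
   each case the measure strictly decreases.  Since the lexicographic order on
   triples of naturals is well founded, no infinite search sequence exists. *)

Definition formula_eq_dec (x y : formula) : {x = y} + {x <> y}.
Proof. decide equality. apply PeanoNat.Nat.eq_dec. Defined.

Fixpoint fsize (f : formula) : nat :=
  match f with
  | Var _ | Top => 1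
  | And a b | Or a b | Imp a b => S (fsize a + fsize b)
  | Neg a => S (fsize a)
  end.

Definition children (f : formula) : list formula :=
  match f with
  | Var _ | Top => []
  | And a b | Or a b | Imp a b => [a; b]
  | Neg a => [a]
  end.

Fixpoint sub (f : formula) : list formula :=
  match f with
  | Var _ | Top => [f]
  | And a b | Or a b | Imp a b => f :: sub a ++ sub b
  | Neg a => f :: sub a
  end.

Lemma sub_self (x : formula) : In x (sub x).
Proof. destruct x; simpl; auto. Qed.

Lemma children_sub (x y : formula) : In y (children x) -> In y (sub x).
Proof.
  destruct x; simpl; intros Hy; try contradiction;
    repeat destruct Hy as [<- | Hy]; try contradiction;
    right; rewrite ?in_app_iff; auto using sub_self.
Qed.

Lemma sub_trans (x y z : formula) : In y (sub x) -> In z (sub y) -> In z (sub x).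
Proof.
  revert y z. induction x; simpl; intros y z Hy Hz;
    rewrite ?in_app_iff in *;
    destruct Hy as [<- | Hy]; simpl in Hz; rewrite ?in_app_iff in *; try tauto;
    try (destruct Hy; [right; left; eauto | right; right; eauto]);
    right; eauto.
Qed.

Definition subformula_closed (U : list formula) : Prop :=
  forall x, In x U -> incl (children x) U.

Lemma sub_list_closed (l : list formula) : subformula_closed (flat_map sub l).
Proof.
  intros x Hx y Hy. apply in_flat_map in Hx as [z [Hz Hxz]].
  apply in_flat_map. exists z. split; [exact Hz |].
  eapply sub_trans; [exact Hxz | exact (children_sub _ _ Hy)].
Qed.

Definition absentb (l : list formula) (x : formula) : bool :=
  if in_dec formula_eq_dec x l then false else true.
Arguments absentb : simpl never.

Definition missing (U l : list formula) : nat := length (filter (absentb l) U).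

Lemma absentb_spec (l : list formula) (x : formula) :
  absentb l x = true <-> ~ In x l.
Proof.
  unfold absentb. destruct (in_dec formula_eq_dec x l); split; congruence || tauto.
Qed.

Lemma missing_antitone (U l1 l2 : list formula) :
  incl l1 l2 -> missing U l2 <= missing U l1.
Proof.
  intro Hincl. unfold missing. induction U as [| u U IH]; simpl; [lia |].
  destruct (absentb l2 u) eqn:E2, (absentb l1 u) eqn:E1; simpl; try lia.
  exfalso. apply Bool.not_true_iff_false in E1. apply E1, absentb_spec.
  intro Hu. apply absentb_spec in E2. exact (E2 (Hincl u Hu)).
Qed.

Lemma missing_ext (U l1 l2 : list formula) :
  (forall x, In x l1 <-> In x l2) -> missing U l1 = missing U l2.
Proof.
  intro E.
  pose proof (missing_antitone U l1 l2 (fun x => proj1 (E x))).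
  pose proof (missing_antitone U l2 l1 (fun x => proj2 (E x))). lia.
Qed.

Lemma missing_cons_lt (U l : list formula) (a : formula) :
  In a U -> ~ In a l -> missing U (a :: l) < missing U l.
Proof.
  intros Ha Hna. unfold missing.
  induction U as [| u U IH]; simpl in Ha; [contradiction |]. simpl.
  destruct Ha as [-> | Ha].
  - assert (Hle : missing U (a :: l) <= missing U l)
      by (apply missing_antitone; intros x h; right; exact h).
    unfold missing in Hle.
    replace (absentb (a :: l) a) with false
      by (symmetry; apply Bool.not_true_iff_false; rewrite absentb_spec; simpl; tauto).
    replace (absentb l a) with true by (symmetry; apply absentb_spec; exact Hna).
    simpl. lia.
  - specialize (IH Ha).
    destruct (absentb (a :: l) u) eqn:E1, (absentb l u) eqn:E2; simpl; try lia.
    exfalso. apply absentb_spec in E1. apply Bool.not_true_iff_false in E2.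
    apply E2, absentb_spec. intro Hu; apply E1; right; exact Hu.
Qed.

Lemma wf_no_descending_sequence (A : Type) (R : A -> A -> Prop) :
  well_founded R -> ~ exists g : nat -> A, forall i, R (g (S i)) (g i).
Proof.
  intros Hwf [g Hg].
  assert (Hacc : forall x, Acc R x -> forall i, g i <> x).
  { intros x Ax. induction Ax as [x _ IH]. intros i Hi.
    rewrite <- Hi in IH. exact (IH _ (Hg i) (S i) eq_refl). }
  exact (Hacc (g 0) (Hwf (g 0)) 0 eq_refl).
Qed.

Definition lex3 : (nat * nat) * nat -> (nat * nat) * nat -> Prop :=
  slexprod _ _ (slexprod _ _ lt lt) lt.

Lemma lex3_wf : well_founded lex3.
Proof. apply wf_slexprod; [apply wf_slexprod |]; apply lt_wf. Qed.

Definition within (U : list formula) (S : hseq) : Prop :=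
  incl (goal S :: ctx S) U.

Definition measure (U : list formula) (S : hseq) : (nat * nat) * nat :=
  ((missing U (ctx S), missing U (hist S)), fsize (goal S)).

Lemma seq_equiv_sym (S T : hseq) : seq_equiv S T -> seq_equiv T S.
Proof.
  intros [Hh [Hc Hg]]. split; [| split].
  - intro x; symmetry; apply Hh.
  - apply Permutation_sym; exact Hc.
  - symmetry; exact Hg.
Qed.

Lemma within_seq_equiv (U : list formula) (S T : hseq) :
  seq_equiv S T -> within U S -> within U T.
Proof.
  intros [_ [Hc Hg]] HS x [<- | Hx]; apply HS.
  - left; exact Hg.
  - right; exact (Permutation_in _ (Permutation_sym Hc) Hx).
Qed.

Lemma measure_seq_equiv (U : list formula) (S T : hseq) :
  seq_equiv S T -> measure U S = measure U T.
Proof.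
  intros [Hh [Hc Hg]]. unfold measure. rewrite Hg.
  rewrite (missing_ext U (hist S) (hist T) Hh).
  rewrite (missing_ext U (ctx S) (ctx T)); [reflexivity |].
  intro x; split; apply Permutation_in; [| apply Permutation_sym]; exact Hc.
Qed.

(* Subformula property: a premise only contains formulas of the conclusion
   and immediate subformulas of its goal or of its antecedent formulas. *)
Lemma rule_premise_within (s : system) (U : list formula) prems (C P : hseq) :
  subformula_closed U -> rule s prems C -> In P prems -> within U C -> within U P.
Proof.
  intros HU Hr HP HC.
  assert (Kg : incl (children (goal C)) U) by (apply HU, HC; left; reflexivity).
  assert (Kc : forall y, In y (ctx C) -> incl (children y) U)
    by (intros y Hy; apply HU, HC; right; exact Hy).
  destruct Hr; simpl in HP; repeat destruct HP as [<- | HP]; try contradiction;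
    simpl in Kg, Kc; intros x Hx; simpl in Hx; repeat destruct Hx as [<- | Hx];
    first [ apply HC; simpl; tauto
          | apply Kg; simpl; tauto
          | eapply Kc; [left; reflexivity | simpl; tauto] ].
Qed.

Inductive premise_shape (C P : hseq) : Prop :=
| grows_ctx (a : formula) :
    ~ In a (ctx C) -> ctx P = a :: ctx C -> premise_shape C P
| grows_hist :
    ~ In (goal C) (hist C) -> ctx P = ctx C -> hist P = goal C :: hist C ->
    premise_shape C P
| shrinks_goal :
    ctx P = ctx C -> hist P = hist C -> fsize (goal P) < fsize (goal C) ->
    premise_shape C P.

Lemma not_in_cons_larger (a c : formula) (G : list formula) :
  ~ In a G -> fsize a < fsize c -> ~ In a (c :: G).
Proof. intros Hn Hlt [-> | Ha]; [lia | contradiction]. Qed.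

(* Every premise of every rule has one of the three shapes; the side conditions
   of the rules ("alpha not in Gamma", "phi not in H") are exactly what makes
   the added formula new. *)
Lemma rule_premise_shape (s : system) prems (C P : hseq) :
  rule s prems C -> In P prems -> premise_shape C P.
Proof.
  intros Hr HP.
  destruct Hr; simpl in HP; repeat destruct HP as [<- | HP]; try contradiction;
    first [ solve [ eapply grows_ctx; [simpl | reflexivity];
                    first [assumption | apply not_in_cons_larger; simpl; [assumption | lia]] ]
          | solve [ apply grows_hist; simpl; auto ]
          | solve [ apply shrinks_goal; simpl; auto; lia ] ].
Qed.

Lemma premise_shape_decreases (U : list formula) (C P : hseq) :
  premise_shape C P -> within U C -> within U P ->
  lex3 (measure U P) (measure U C).
Proof.
  intros Hs HC HP. unfold measure.
  destruct Hs as [a Ha Hc | Hh Hc Hhist | Hc Hhist Hg]; rewrite Hc.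
  - apply left_slex, left_slex, missing_cons_lt; [| exact Ha].
    apply HP; right; rewrite Hc; left; reflexivity.
  - rewrite Hhist. apply left_slex, right_slex, missing_cons_lt; [| exact Hh].
    apply HC; left; reflexivity.
  - rewrite Hhist. apply right_slex; exact Hg.
Qed.

Lemma premise_step_decreases (s : system) (U : list formula) (S' S : hseq) :
  subformula_closed U -> premise_step s S' S -> within U S ->
  within U S' /\ lex3 (measure U S') (measure U S).
Proof.
  intros HU [prems [C [Hr [HCS [P [HP HPS]]]]]] HS.
  assert (HC : within U C)
    by exact (within_seq_equiv U S C (seq_equiv_sym C S HCS) HS).
  pose proof (rule_premise_within s U prems C P HU Hr HP HC) as HPU.
  split; [exact (within_seq_equiv U P S' HPS HPU) |].
  rewrite <- (measure_seq_equiv U P S' HPS), <- (measure_seq_equiv U C S HCS).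
  exact (premise_shape_decreases U C P (rule_premise_shape s prems C P Hr HP) HC HPU).
Qed.

Theorem theorem5p5 : forall s : system,
  ~ exists f : nat -> hseq, forall i : nat, premise_step s (f (S i)) (f i).
Proof.
  intros s [f Hf].
  set (U := flat_map sub (goal (f 0) :: ctx (f 0))).
  assert (HU : subformula_closed U) by apply sub_list_closed.
  assert (H0 : within U (f 0)).
  { intros x Hx. apply in_flat_map. exists x. split; [exact Hx | apply sub_self]. }
  assert (Hall : forall i, within U (f i)).
  { induction i; [exact H0 | exact (proj1 (premise_step_decreases s U _ _ HU (Hf i) IHi))]. }
  apply (wf_no_descending_sequence _ lex3 lex3_wf).
  exists (fun i => measure U (f i)). intro i.
  exact (proj2 (premise_step_decreases s U _ _ HU (Hf i) (Hall i))).
Qed.
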